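(* Let $t^*>0$ be given and consider the sensor-probing scheme applied to the closed loop, where the closed loop is SG$q$-RO on $[0,t^*]$, satisfies the SG-AS assumption (constant $\Delta_x$, function $\beta_x$) and the output-derivative boundedness assumption, the adversary satisfies the adversary model, and uses the high-gain estimator with $\widehat Y(0)\in\mathcal{Y}(h(x_p(0)))$, whose estimate is held on the non-probing interval $\overline{\mathcal{T}}_0=[t^*,T)$, i.e. $\hat x(t)=\Psi(\widehat Y(t^* ),Y^*(t^* ))$ for $t\in\overline{\mathcal{T}}_0$. Let $K_{\tilde x}>0$ and let $\theta\ge1$ be such that $|\hat x(t^* )-x(t^* )|\le K_{\tilde x}$. Suppose $|x(t^* )|\le\Delta_x$. Then there exists $\overline\sigma_{\tilde x}\in\mathcal{K}_\infty$ such that $$|\hat x(t)-x(t)|\le K_{\tilde x}+\Delta_x+\overline\sigma_{\tilde x}(\Delta_x)\qquad\forall t\in\overline{\mathcal{T}}_0,$$ and for every $\epsilon_{\tilde x}>0$ there exists $T>0$ such that $$|\hat x(T)-x(T)|\le K_{\tilde x}+\Delta_x+\epsilon_{\tilde x}.$$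
   Context: Norm $|\cdot|$ is the infinity norm. Plant $\dot x_p=f_p(x_p,u)$, $y=h(x_p)+a$ ($a$ an attack signal), controller $\dot x_c=f_c(x_c,y)$, $u=\kappa(x_c,y)$; $f_p,f_c,\kappa$ locally Lipschitz, $h$ sufficiently smooth, trajectories exist for all time. $x=(x_p,x_c)\in\mathbb{R}^{n_p+n_c}$, $f(x,y):=(f_p(x_p,\kappa(x_c,y)),f_c(x_c,y))$. SG-AS assumption: there exist $\Delta_x>0$, $\beta_x\in\mathcal{KL}$ with $|x(t)|\le\beta_x(|x(0)|,t)$, $t\ge0$, for solutions of $\dot x=f(x,h(x_p))$ with $|x(0)|\le\Delta_x$. Adversary model: the adversary can alter sensor readings via $a$, knows $f_p,h,f_c,\kappa$, and does not know $u$ or $x(0)$. SG$q$-RO on $[0,t^*]$: for each $\Delta_x\ge0$ there exist $q\in\mathbb{N}_{\ge1}$, a $C^{q+1}$ function $y^*:[0,t^*]\to\mathbb{R}^{n_y}$ and $\Psi:\mathbb{R}^{2(q+1)n_y}\to\mathbb{R}^{n_p+n_c}$ such that for the probed system $\dot x=f(x,y^*(t))$ with $|x(0)|\le\Delta_x$: the solution exists on $[0,t^*]$; $x(t)=\Psi(Y(t),Y^*(t))$ on $[0,t^*]$, with $Y=(h(x_p),\dots,\tfrac{d^q}{dt^q}h(x_p))$ and $Y^*=(y^*,\dots,y^{*(q)})$; and there is $\rho_\Psi\in\mathcal{K}_\infty$ with $|\Psi(\widehat Y,Y^* )-\Psi(Y,Y^* )|\le\rho_\Psi(|\widehat Y-Y|)$.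 Output-derivative boundedness assumption: there are compact sets containing $(\tfrac{d}{dt}h(x_p(t)),\dots,\tfrac{d^q}{dt^q}h(x_p(t)))$ and $\tfrac{d^{q+1}}{dt^{q+1}}h(x_p(t))$ for $t\in[0,t^*]$. Probing scheme: on $\mathcal{T}_0=[0,t^* )$ the adversary sets $y(t)=y^*(t)$ (closed loop $\dot x=f(x,y^*(t))$); on $\overline{\mathcal{T}}_0=[t^*,T)$ it sets $y=h(x_p)$ (closed loop $\dot x=f(x,h(x_p))$). Estimator: on $\mathcal{T}_0$, $\dot{\widehat Y}=\widehat A\widehat Y+\theta\Delta_\theta\widehat H(h(x_p)-\widehat C\widehat Y)$ with $\widehat A$ the block shift matrix (identity blocks on the block superdiagonal), $\widehat C=[\mathbb{I}_{n_y}\ 0]$, $\widehat H=[a_1\mathbb{I}_{n_y},\dots,a_{q+1}\mathbb{I}_{n_y}]^T$ with $s^{q+1}+a_1s^q+\dots+a_{q+1}$ Hurwitz, $\Delta_\theta=\mathrm{diag}(\mathbb{I},\theta\mathbb{I},\dots,\theta^q\mathbb{I})$; on $\overline{\mathcal{T}}_0$, $\dot{\widehat Y}=0$. $\mathcal{Y}(r):=\{\widehat Y:|\widehat Y-r|\le\epsilon_y\}$ for fixed $\epsilon_y>0$. Estimate $\hat x=\Psi(\widehat Y(t),Y^*(t))$ on $\mathcal{T}_0$. *)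

(* MathComp + MathComp-Analysis (R : realType).  Vectors are row
   vectors 'rV[R]_n; the MathComp-Analysis norm on matrices is the max
   (infinity) norm, as in the paper. *)
From HB Require Import structures.
From mathcomp Require Import all_boot all_order all_algebra.
From mathcomp Require Import all_classical all_reals all_analysis.
From mathcomp Require Import complex.
Unset Printing Implicit Defensive.
Import Order.TTheory GRing.Theory Num.Theory.
Import numFieldNormedType.Exports.
Local Open Scope classical_set_scope.
Local Open Scope ring_scope.

Definition classK {R : realType} (a : R -> R) : Prop :=
  a 0 = 0 /\ {within [set s : R | 0 <= s], continuous a} /\
  (forall s1 s2 : R, 0 <= s1 -> s1 < s2 -> a s1 < a s2).

Definition classKinf {R : realType} (a : R -> R) : Prop :=
  classK a /\ a s @[s --> +oo] --> +oo.

Definition classKL {R : realType} (b : R -> R -> R) : Prop :=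
  (forall t : R, 0 <= t -> classK (fun s => b s t)) /\
  (forall s : R, 0 <= s ->
     (forall t1 t2 : R, 0 <= t1 -> t1 <= t2 -> b s t2 <= b s t1) /\
     b s t @[t --> +oo] --> 0).

Definition loc_lipschitz2 {R : realType} {m n k : nat}
  (g : 'rV[R]_m -> 'rV[R]_n -> 'rV[R]_k) : Prop :=
  forall (z1 : 'rV[R]_m) (z2 : 'rV[R]_n), exists r : R, exists L : R, 0 < r /\
    forall a1 b1 a2 b2, `|a1 - z1| < r -> `|b1 - z1| < r ->
      `|a2 - z2| < r -> `|b2 - z2| < r ->
      `|g a1 a2 - g b1 b2| <= L * Num.max `|a1 - b1| `|a2 - b2|.

Definition Cn {R : realType} {n : nat} (k : nat) (g : R -> 'rV[R]_n) : Prop :=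
  (forall i, (i < k)%N -> forall t : R, derivable ((derive1n i g)) t 1) /\
  continuous ((derive1n k g)).

(* Y(t) = (g(t), g'(t), ..., g^(q)(t)) stacked as the rows of a matrix *)
Definition derivs {R : realType} {n : nat} (q : nat) (g : R -> 'rV[R]_n) (t : R)
  : 'M[R]_(q.+1, n) := \matrix_(i < q.+1, j < n) ((derive1n i g) t) ord0 j.

(* x = (x_p, x_c) is stored as row_mx x_p x_c *)
Definition xp_of {R : realType} {np nc : nat} (x : 'rV[R]_(np + nc)) : 'rV[R]_np :=
  lsubmx x.
Definition xc_of {R : realType} {np nc : nat} (x : 'rV[R]_(np + nc)) : 'rV[R]_nc :=
  rsubmx x.

Definition cl_field {R : realType} {np nc ny nu : nat}
  (fp : 'rV[R]_np -> 'rV[R]_nu -> 'rV[R]_np)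
  (fc : 'rV[R]_nc -> 'rV[R]_ny -> 'rV[R]_nc)
  (kappa : 'rV[R]_nc -> 'rV[R]_ny -> 'rV[R]_nu)
  (x : 'rV[R]_(np + nc)) (y : 'rV[R]_ny) : 'rV[R]_(np + nc) :=
  row_mx (fp (xp_of x) (kappa (xc_of x) y)) (fc (xc_of x) y).

Definition nominal_sol {R : realType} {np nc ny : nat}
  (f : 'rV[R]_(np + nc) -> 'rV[R]_ny -> 'rV[R]_(np + nc))
  (h : 'rV[R]_np -> 'rV[R]_ny) (z : R -> 'rV[R]_(np + nc)) : Prop :=
  {within [set t : R | 0 <= t], continuous z} /\
  (forall t : R, 0 < t -> is_derive t 1 z (f (z t) (h (xp_of (z t))))).

Definition probed_sol {R : realType} {np nc ny : nat}
  (f : 'rV[R]_(np + nc) -> 'rV[R]_ny -> 'rV[R]_(np + nc))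
  (ystar : R -> 'rV[R]_ny) (tstar : R) (z : R -> 'rV[R]_(np + nc)) : Prop :=
  {within `[0, tstar], continuous z} /\
  (forall t : R, 0 < t < tstar -> is_derive t 1 z (f (z t) (ystar t))).

Definition SG_AS {R : realType} {np nc ny : nat}
  (f : 'rV[R]_(np + nc) -> 'rV[R]_ny -> 'rV[R]_(np + nc))
  (h : 'rV[R]_np -> 'rV[R]_ny) (Dx : R) (bx : R -> R -> R) : Prop :=
  0 < Dx /\ classKL bx /\
  forall z : R -> 'rV[R]_(np + nc), nominal_sol f h z -> `|z 0| <= Dx ->
    forall t : R, 0 <= t -> `|z t| <= bx `|z 0| t.

Definition RO_data {R : realType} {np nc ny : nat}
  (f : 'rV[R]_(np + nc) -> 'rV[R]_ny -> 'rV[R]_(np + nc))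
  (h : 'rV[R]_np -> 'rV[R]_ny) (tstar Delta : R) (q : nat)
  (ystar : R -> 'rV[R]_ny)
  (Psi : 'M[R]_(q.+1, ny) -> 'M[R]_(q.+1, ny) -> 'rV[R]_(np + nc)) : Prop :=
  (0 < q)%N /\ Cn q.+1 ystar /\
  (forall x0 : 'rV[R]_(np + nc), `|x0| <= Delta ->
     exists z, probed_sol f ystar tstar z /\ z 0 = x0) /\
  (forall z, probed_sol f ystar tstar z -> `|z 0| <= Delta ->
     forall t : R, 0 < t < tstar ->
       z t = Psi (derivs q (fun s => h (xp_of (z s))) t) (derivs q ystar t)) /\
  (exists rhoPsi : R -> R, classKinf rhoPsi /\
     forall Yh Y Ys : 'M[R]_(q.+1, ny), `|Psi Yh Ys - Psi Y Ys| <= rhoPsi `|Yh - Y|).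

Definition SGq_RO {R : realType} {np nc ny : nat}
  (f : 'rV[R]_(np + nc) -> 'rV[R]_ny -> 'rV[R]_(np + nc))
  (h : 'rV[R]_np -> 'rV[R]_ny) (tstar : R) : Prop :=
  forall Delta : R, 0 <= Delta ->
    exists (q : nat) (ystar : R -> 'rV[R]_ny)
           (Psi : 'M[R]_(q.+1, ny) -> 'M[R]_(q.+1, ny) -> 'rV[R]_(np + nc)),
      RO_data f h tstar Delta q ystar Psi.

Definition out_deriv_bdd {R : realType} {ny : nat} (q : nat)
  (yfun : R -> 'rV[R]_ny) (tstar : R) : Prop :=
  (forall i, (i <= q)%N -> forall t : R, 0 < t < tstar ->
     derivable ((derive1n i yfun)) t 1) /\
  exists (K1 : set 'M[R]_(q, ny)) (K2 : set 'rV[R]_ny),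
    compact K1 /\ compact K2 /\
    forall t : R, 0 < t < tstar ->
      K1 (\matrix_(i < q, j < ny) ((derive1n i.+1 yfun) t) ord0 j) /\
      K2 ((derive1n q.+1 yfun) t).

Definition probing_cl_sol {R : realType} {np nc ny : nat}
  (f : 'rV[R]_(np + nc) -> 'rV[R]_ny -> 'rV[R]_(np + nc))
  (h : 'rV[R]_np -> 'rV[R]_ny) (ystar : R -> 'rV[R]_ny) (tstar : R)
  (x : R -> 'rV[R]_(np + nc)) : Prop :=
  {within [set t : R | 0 <= t], continuous x} /\
  (forall t : R, 0 < t < tstar -> is_derive t 1 x (f (x t) (ystar t))) /\
  (forall t : R, tstar < t -> is_derive t 1 x (f (x t) (h (xp_of (x t))))).

(* s^(q+1) + a_1 s^q + ... + a_(q+1); a i stands for a_(i+1) *)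
Definition hg_poly {R : realType} (q : nat) (a : 'I_q.+1 -> R) : {poly R} :=
  'X^(q.+1) + \sum_(i < q.+1) a i *: 'X^(q - i).

Definition hurwitz {R : realType} (p : {poly R}) : Prop :=
  forall z : R[i], root (map_poly (fun r : R => Complex r 0) p) z -> complex.Re z < 0.

(* A Yh + theta Delta_theta H (y - C Yh), rows of Yh = blocks *)
Definition hg_rhs {R : realType} {ny : nat} (q : nat) (a : 'I_q.+1 -> R)
  (theta : R) (Yh : 'M[R]_(q.+1, ny)) (y : 'rV[R]_ny) : 'M[R]_(q.+1, ny) :=
  \matrix_(i < q.+1, j < ny)
    ((if (i < q)%N then Yh (inord i.+1) j else 0)
     + theta ^+ i.+1 * a i * (y ord0 j - Yh ord0 j)).

Definition estimator_sol {R : realType} {np nc ny : nat} (q : nat)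
  (a : 'I_q.+1 -> R) (theta : R) (h : 'rV[R]_np -> 'rV[R]_ny) (tstar : R)
  (x : R -> 'rV[R]_(np + nc)) (Yh : R -> 'M[R]_(q.+1, ny)) : Prop :=
  {within [set t : R | 0 <= t], continuous Yh} /\
  (forall t : R, 0 < t < tstar ->
     is_derive t 1 Yh (hg_rhs q a theta (Yh t) (h (xp_of (x t))))) /\
  (forall t : R, tstar <= t -> Yh t = Yh tstar).

Definition xhat {R : realType} {np nc ny : nat} (q : nat)
  (Psi : 'M[R]_(q.+1, ny) -> 'M[R]_(q.+1, ny) -> 'rV[R]_(np + nc))
  (Yh : R -> 'M[R]_(q.+1, ny)) (ystar : R -> 'rV[R]_ny) (tstar t : R)
  : 'rV[R]_(np + nc) :=
  if t < tstar then Psi (Yh t) (derivs q ystar t)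
  else Psi (Yh tstar) (derivs q ystar tstar).

From HB Require Import structures.
From mathcomp Require Import all_boot all_order all_algebra.
From mathcomp Require Import all_classical all_reals all_analysis.
Import Order.TTheory GRing.Theory Num.Theory.
Import numFieldNormedType.Exports.
Local Open Scope classical_set_scope.
Local Open Scope ring_scope.

(** From tstar on the estimate is frozen at xhat tstar, so by the triangle
    inequality the error at a time t >= tstar is at most
    |xhat tstar - x tstar| + |x tstar| + |x t| <= K + Δx + |x t|.  Since the
    adversary stops probing at tstar, the trajectory restarted at tstar solves
    the nominal closed loop from a state of norm <= Δx, so SG-AS bounds |x t|
    by β(Δx, t - tstar).  This is at most β(Δx, 0), giving the uniform bound
    with σ s := β(s, 0) + s, and it tends to 0 as t -> +oo, giving the
    asymptotic bound. *)

Section Translation.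
Context {R : realType} {V : normedModType R} {f : R -> V} {c : R}.

Lemma is_derive_translate (s : R) (df : V) :
  is_derive (s + c) 1 f df -> is_derive s 1 (fun u => f (u + c)) df.
Proof.
move=> [Hd Hv].
have E : (fun k : R => k^-1 *: (((fun u => f (u + c)) \o shift s) (k *: 1)
                                 - f (s + c)))
       = (fun k : R => k^-1 *: ((f \o shift (s + c)) (k *: 1) - f (s + c))).
  by apply: funext => k /=; rewrite addrA.
by split; rewrite ?/derivable ?/derive E.
Qed.

Lemma continuous_translate (s : R) :
  {for s + c, continuous f} -> {for s, continuous (fun u => f (u + c))}.
Proof.
rewrite continuous_shift (continuous_shift _ s).
suff -> : (fun u => f (u + c)) \o shift s = f \o shift (s + c) by [].
by apply: funext => k /=; rewrite addrA.
Qed.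

End Translation.

Lemma within_ge0_continuous_at {R : realType} {V : normedModType R}
    {f : R -> V} {t : R} :
  {within [set s : R | 0 <= s], continuous f} -> 0 < t -> {for t, continuous f}.
Proof.
move=> Hf t_gt0.
have : {within [set s : R | 0 < s], continuous f}.
  by apply: continuous_subspaceW Hf => s /= /ltW.
rewrite continuous_open_subspace; last exact: open_gt.
by apply; rewrite inE.
Qed.

Section ComparisonFunctions.
Context {R : realType}.

Lemma classK_le {a : R -> R} {s1 s2 : R} :
  classK a -> 0 <= s1 -> s1 <= s2 -> a s1 <= a s2.
Proof.
move=> [_ [_ a_incr]] s1_ge0; rewrite le_eqVlt => /predU1P[-> //|lt_s12].
exact/ltW/a_incr.
Qed.

Lemma classK_ge0 {a : R -> R} {s : R} : classK a -> 0 <= s -> 0 <= a s.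
Proof. by move=> Ka s_ge0; case: (Ka) (classK_le Ka (lexx 0) s_ge0) => ->. Qed.

Lemma classKinf_addid (a : R -> R) : classK a -> classKinf (fun s => a s + s).
Proof.
move=> Ka; have [a0 [a_cont a_incr]] := Ka.
split; first split.
- by rewrite a0 addr0.
- split.
  + apply/subspace_continuousP => s s_ge0; apply: cvgD; last exact: cvg_within.
    by move/subspace_continuousP: a_cont; apply.
  + by move=> s1 s2 s1_ge0 lt_s12; apply: ltrD => //; apply: a_incr.
- apply: (@ger_cvgy _ _ _ _ id); last exact: cvg_id.
  by near=> s; rewrite lerDr (classK_ge0 Ka).
Unshelve. all: by end_near.
Qed.

Lemma classKL_le {b : R -> R -> R} {s1 s2 t1 t2 : R} :
  classKL b -> 0 <= s1 -> s1 <= s2 -> 0 <= t1 -> t1 <= t2 -> b s1 t2 <= b s2 t1.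
Proof.
move=> [bK b_decr] s1_ge0 le_s12 t1_ge0 le_t12.
apply: le_trans ((b_decr s1 s1_ge0).1 _ _ t1_ge0 le_t12) _.
exact: classK_le (bK _ t1_ge0) s1_ge0 le_s12.
Qed.

Lemma classKL_small {b : R -> R -> R} {s eps : R} :
  classKL b -> 0 <= s -> 0 < eps -> exists t, 0 < t /\ b s t < eps.
Proof.
move=> [_ b_decr] s_ge0 eps_gt0.
have [M [_ HM]] := cvgr_lt 0 (b_decr s s_ge0).2 eps eps_gt0.
exists (`|M| + 1); split; first by rewrite ltr_wpDl.
by apply: HM; rewrite (le_lt_trans (ler_norm M)) // ltrDl.
Qed.

End ComparisonFunctions.

Section ProbingTail.
Context {R : realType} {np nc ny : nat}.
Context {f : 'rV[R]_(np + nc) -> 'rV[R]_ny -> 'rV[R]_(np + nc)}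
        {h : 'rV[R]_np -> 'rV[R]_ny} {ystar : R -> 'rV[R]_ny} {tstar : R}.
Hypothesis tstar_gt0 : 0 < tstar.

Lemma probing_cl_sol_tail_nominal {x : R -> 'rV[R]_(np + nc)} :
  probing_cl_sol f h ystar tstar x -> nominal_sol f h (fun u => x (u + tstar)).
Proof.
move=> [x_cont [_ x_tail]]; split.
- apply: continuous_in_subspaceT => s; rewrite inE /= => s_ge0.
  apply: continuous_translate; apply: within_ge0_continuous_at x_cont _.
  by rewrite ltr_wpDl.
- by move=> t t_gt0; apply: is_derive_translate; apply: x_tail; rewrite ltrDr.
Qed.

Lemma SG_AS_tail_bound {Dx : R} {bx : R -> R -> R} {x : R -> 'rV[R]_(np + nc)} :
  SG_AS f h Dx bx -> probing_cl_sol f h ystar tstar x -> `|x tstar| <= Dx ->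
  forall t, tstar <= t -> `|x t| <= bx Dx (t - tstar).
Proof.
move=> [_ [KLbx bx_bound]] x_sol xt_le t le_tstar_t.
have t_tstar_ge0 : 0 <= t - tstar by rewrite subr_ge0.
have x0_le : `|x (0 + tstar)| <= Dx by rewrite add0r.
have := bx_bound _ (probing_cl_sol_tail_nominal x_sol) x0_le _ t_tstar_ge0.
rewrite /= subrK add0r => /le_trans; apply.
exact: classKL_le.
Qed.

End ProbingTail.

Section HeldEstimate.
Context {R : realType} {np nc ny q : nat}.
Context {Psi : 'M[R]_(q.+1, ny) -> 'M[R]_(q.+1, ny) -> 'rV[R]_(np + nc)}
        {Yh : R -> 'M[R]_(q.+1, ny)} {ystar : R -> 'rV[R]_ny} {tstar : R}.

Lemma xhat_held (t : R) :
  tstar <= t -> xhat q Psi Yh ystar tstar t = xhat q Psi Yh ystar tstar tstar.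
Proof. by move=> le_tstar_t; rewrite /xhat ltNge le_tstar_t ltxx. Qed.

Lemma xhat_held_error {x : R -> 'rV[R]_(np + nc)} {K D : R} :
  `|xhat q Psi Yh ystar tstar tstar - x tstar| <= K -> `|x tstar| <= D ->
  forall t, tstar <= t -> `|xhat q Psi Yh ystar tstar t - x t| <= K + D + `|x t|.
Proof.
move=> err_le xt_le t le_tstar_t; rewrite xhat_held //.
apply: le_trans (ler_distD (x tstar) _ _) _; rewrite -addrA lerD //.
by apply: le_trans (ler_normB _ _) _; rewrite lerD2r.
Qed.

End HeldEstimate.

Theorem lemma2 (R : realType) (np nc ny nu : nat)
  (fp : 'rV[R]_np -> 'rV[R]_nu -> 'rV[R]_np)
  (h : 'rV[R]_np -> 'rV[R]_ny)
  (fc : 'rV[R]_nc -> 'rV[R]_ny -> 'rV[R]_nc)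
  (kappa : 'rV[R]_nc -> 'rV[R]_ny -> 'rV[R]_nu)
  (Hfp : loc_lipschitz2 fp) (Hfc : loc_lipschitz2 fc)
  (Hkappa : loc_lipschitz2 kappa)
  (Hh : forall z : 'rV[R]_np, differentiable h z)
  (tstar : R) (Htstar : 0 < tstar)
  (* SGq-RO on [0, tstar] *)
  (HRO : SGq_RO (cl_field fp fc kappa) h tstar)
  (* SG-AS with constant Dx and function bx *)
  (Dx : R) (bx : R -> R -> R) (HAS : SG_AS (cl_field fp fc kappa) h Dx bx)
  (* probing data used by the adversary (from SGq-RO for the bound Delta0) *)
  (Delta0 : R) (q : nat) (ystar : R -> 'rV[R]_ny)
  (Psi : 'M[R]_(q.+1, ny) -> 'M[R]_(q.+1, ny) -> 'rV[R]_(np + nc))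
  (HROd : RO_data (cl_field fp fc kappa) h tstar Delta0 q ystar Psi)
  (* closed-loop trajectory under the probing scheme on [0, +oo) *)
  (x : R -> 'rV[R]_(np + nc))
  (Hx0 : `|x 0| <= Delta0)
  (Hx : probing_cl_sol (cl_field fp fc kappa) h ystar tstar x)
  (* output-derivative boundedness *)
  (Hbdd : out_deriv_bdd q (fun t => h (xp_of (x t))) tstar)
  (* high-gain estimator *)
  (a : 'I_q.+1 -> R) (Ha : hurwitz (hg_poly q a))
  (theta : R) (Htheta : 1 <= theta)
  (eps_y : R) (Heps_y : 0 < eps_y)
  (Yhat : R -> 'M[R]_(q.+1, ny))
  (HYhat : estimator_sol q a theta h tstar x Yhat)
  (HY0 : `|row ord0 (Yhat 0) - h (xp_of (x 0))| <= eps_y)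
  (* error bound at tstar *)
  (Kx : R) (HKx : 0 < Kx)
  (Herr : `|xhat q Psi Yhat ystar tstar tstar - x tstar| <= Kx)
  (Hxt : `|x tstar| <= Dx) :
  (exists sig : R -> R, classKinf sig /\
     forall t : R, tstar <= t ->
       `|xhat q Psi Yhat ystar tstar t - x t| <= Kx + Dx + sig Dx) /\
  (forall eps : R, 0 < eps -> exists T : R, 0 < T /\ tstar <= T /\
       `|xhat q Psi Yhat ystar tstar T - x T| <= Kx + Dx + eps).
Proof.
have [Dx_gt0 [KLbx _]] := HAS.
have x_tail := SG_AS_tail_bound Htstar HAS Hx Hxt.
have err_tail := xhat_held_error Herr Hxt.
split.
  exists (fun s => bx s 0 + s); split; first exact/classKinf_addid/(KLbx.1 0).
  move=> t le_tstar_t; apply: le_trans (err_tail t le_tstar_t) _.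
  rewrite lerD2l; apply: le_trans (x_tail t le_tstar_t) _.
  have t_tstar_ge0 : 0 <= t - tstar by rewrite subr_ge0.
  apply: le_trans (classKL_le KLbx (ltW Dx_gt0) (lexx Dx) (lexx 0) t_tstar_ge0) _.
  by rewrite lerDl ltW.
move=> eps eps_gt0.
have [T [T_gt0 bxT_lt]] := classKL_small KLbx (ltW Dx_gt0) eps_gt0.
have le_tstar_T : tstar <= T + tstar by rewrite lerDr ltW.
exists (T + tstar); split; first by rewrite addr_gt0.
split=> //; apply: le_trans (err_tail _ le_tstar_T) _.
rewrite lerD2l; apply: le_trans (x_tail _ le_tstar_T) _.
by rewrite addrK; apply: ltW.
Qed.
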